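(* Let $\mathbf{A}'$ be an $n\times d$ matrix, $k\ge 1$, $\varepsilon\in(0,1)$, and suppose the maximum coverage optimum $\mathbf{OPT}$ of $\mathbf{A}'$ with $k$ subsets satisfies $\mathbf{OPT}\le C_1\, k\log d/\varepsilon^2$ for a constant $C_1$. Then the number of large items in $\mathbf{A}'$ is $O(k\log d/\varepsilon^2)$.
   Context: Item $i$ belongs to subset (column) $j$ iff $A'_{ij}\neq 0$. $\mathbf{OPT}$ is the maximum over sets of $k$ columns of the number of rows having a nonzero entry in at least one of those columns. An item (row) is large if it has at least $d/k$ nonzero entries. The implied constant in $O(\cdot)$ depends only on $C_1$. *)

From HB Require Import structures.
From mathcomp Require Import all_boot all_order all_algebra.
From mathcomp Require Import reals exp.
Set Implicit Arguments. Unset Strict Implicit. Unset Printing Implicit Defensive.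
Import Order.TTheory GRing.Theory Num.Theory.
Local Open Scope ring_scope.

Section Coverage.
Variables (R : realType) (n d : nat).
Implicit Type A : 'M[R]_(n, d).

(* Item (row) i belongs to subset (column) j iff A i j != 0. *)
Definition coverage A (S : {set 'I_d}) : nat :=
  #|[set i : 'I_n | [exists j in S, A i j != 0]]|.

Definition max_coverage A (k : nat) : nat :=
  (\max_(S : {set 'I_d} | (#|S| <= k)%N) coverage A S)%N.

Definition row_nnz A (i : 'I_n) : nat := #|[set j : 'I_d | A i j != 0]|.

Definition large_item A (k : nat) (i : 'I_n) : bool :=
  (d%:R / k%:R <= (row_nnz A i)%:R :> R).

Definition num_large A (k : nat) : nat := #|[set i | large_item A k i]|.
End Coverage.

(* Pick k columns uniformly at random, as a function f : 'I_k -> 'I_d. A row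
   with at least d/k nonzero entries is missed by all k picks with probability
   at most (1 - 1/k)^k <= 1/2, so it is covered by at least half of the d^k
   choices of f. Since every f covers at most OPT rows, double counting the
   pairs (row, f) gives (number of large rows) * d^k / 2 <= d^k * OPT, i.e. the
   number of large rows is at most 2 OPT <= 2 C1 k ln d / eps^2. *)

From HB Require Import structures.
From mathcomp Require Import all_boot all_order all_algebra.
From mathcomp Require Import reals exp.
From mathcomp Require Import zify.
Import Order.TTheory GRing.Theory Num.Theory.

Lemma bernoulli_expn (x j : nat) : x ^ j.+1 + j * x ^ j <= (x + 1) ^ j * x.
Proof.
elim: j => [|j IH]; first by rewrite expn0 expn1 mul0n addn0 mul1n.
have IH' : (x + 1) * (x ^ j.+1 + j * x ^ j) <= (x + 1) * ((x + 1) ^ j * x).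
  by rewrite leq_mul2l IH orbT.
rewrite !expnS in IH' *; nia.
Qed.

(* The nat form of (1 - 1/k)^k <= 1/2. *)
Lemma double_expn_pred_le (k : nat) : 0 < k -> 2 * k.-1 ^ k <= k ^ k.
Proof.
case: k => [//|[//|x]] _ /=.
have := bernoulli_expn x.+1 x.+2; rewrite addn1 expnS => bern.
suff : 2 * x.+1 ^ x.+2 * x.+1 <= x.+2 ^ x.+2 * x.+1 by rewrite leq_mul2r.
nia.
Qed.

Lemma double_expn_subn_le (d k m : nat) : 0 < k -> d <= k * m ->
  2 * (d - m) ^ k <= d ^ k.
Proof.
move=> k_gt0 le_d_km.
have miss : (k * (d - m)) ^ k <= (k.-1 * d) ^ k by rewrite leq_exp2r //; nia.
have half := double_expn_pred_le _ k_gt0.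
rewrite !expnMn in miss.
rewrite -(@leq_pmul2l (k ^ k)) ?expn_gt0 ?k_gt0 // mulnCA.
apply: (leq_trans (leq_mul (leqnn 2) miss)).
by rewrite mulnA leq_mul2r half orbT.
Qed.

Lemma sum_card_rel (I J : finType) (r : I -> J -> bool) :
  \sum_i #|[set j | r i j]| = \sum_j #|[set i | r i j]|.
Proof.
have card_rel (T : finType) (P : pred T) : #|[set x | P x]| = \sum_x P x.
  by rewrite -sum1dep_card big_mkcond; apply: eq_bigr => x _; case: (P x).
under eq_bigr do rewrite card_rel.
by rewrite exchange_big; under [RHS]eq_bigr do rewrite card_rel.
Qed.

Section RandomColumns.
Variables (R : realType) (n d k : nat) (A : 'M[R]_(n, d)).

Definition covers (i : 'I_n) (f : {ffun 'I_k -> 'I_d}) : bool :=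
  [exists x, A i (f x) != 0%R].

Lemma card_covered_le_max_coverage (f : {ffun 'I_k -> 'I_d}) :
  #|[set i | covers i f]| <= max_coverage A k.
Proof.
have -> : #|[set i | covers i f]| = coverage A (f @: setT).
  apply: eq_card => i; rewrite !inE.
  apply/existsP/existsP => [[x Ax]|[j /andP[/imsetP[x _ ->] Ax]]]; last by exists x.
  by exists (f x); rewrite imset_f ?inE.
apply: leq_bigmax_cond.
by apply: (leq_trans (leq_imset_card _ _)); rewrite cardsT card_ord.
Qed.

Lemma card_not_covers (i : 'I_n) :
  #|[set f | ~~ covers i f]| = (d - row_nnz A i) ^ k.
Proof.
have card_zero : #|[set j | A i j == 0%R]| = d - row_nnz A i.
  have := cardsC [set j | A i j == 0%R].
  have -> : ~: [set j | A i j == 0%R] = [set j | A i j != 0%R] by apply/setP => j; rewrite !inE.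
  rewrite card_ord /row_nnz; move: #|_| #|_| => z nz; lia.
rewrite -card_zero -[k in _ ^ k]card_ord -card_ffun_on.
apply: eq_card => f; rewrite inE negb_exists.
apply/forallP/ffun_onP => zero_f x; have := zero_f x; by rewrite inE negbK.
Qed.

Lemma large_item_covered_by_half (i : 'I_n) : 0 < d -> 0 < k ->
  large_item A k i -> d ^ k <= 2 * #|[set f | covers i f]|.
Proof.
move=> d_gt0 k_gt0.
rewrite /large_item ler_pdivrMr ?ltr0n // -natrM ler_nat => large_i.
have miss : 2 * (d - row_nnz A i) ^ k <= d ^ k.
  by apply: double_expn_subn_le; rewrite // mulnC.
have := cardsC [set f | covers i f].
have -> : ~: [set f | covers i f] = [set f | ~~ covers i f] by apply/setP => f; rewrite !inE.
rewrite card_not_covers card_ffun !card_ord; lia.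
Qed.

Lemma num_large_le_double_max_coverage : 0 < d -> 0 < k ->
  num_large A k <= 2 * max_coverage A k.
Proof.
move=> d_gt0 k_gt0.
rewrite -(@leq_pmul2r (d ^ k)) ?expn_gt0 ?d_gt0 //.
rewrite /num_large -sum1dep_card big_distrl /=.
apply: (@leq_trans (\sum_i 2 * #|[set f | covers i f]|)).
  rewrite [leqRHS](bigID (large_item A k)) /=.
  apply: leq_trans (leq_addr _ _); apply: leq_sum => i.
  by rewrite mul1n; apply: large_item_covered_by_half.
rewrite -big_distrr -mulnA leq_mul2l sum_card_rel /=.
apply: (@leq_trans (\sum_(f : {ffun 'I_k -> 'I_d}) max_coverage A k)).
  by apply: leq_sum => f _; apply: card_covered_le_max_coverage.
by rewrite sum_nat_const card_ffun !card_ord mulnC.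
Qed.

End RandomColumns.

Local Open Scope ring_scope.

Theorem lemma8 (R : realType) (C1 : R) :
  exists C : R, forall (n d k : nat) (eps : R) (A : 'M[R]_(n, d)),
    (0 < d)%N -> (1 <= k)%N -> 0 < eps < 1 ->
    (max_coverage A k)%:R <= C1 * k%:R * ln d%:R / eps ^+ 2 ->
    (num_large A k)%:R <= C * k%:R * ln d%:R / eps ^+ 2.
Proof.
exists (2 * C1) => n d k eps A d_gt0 k_gt0 _ opt_le.
have large_le : (num_large A k)%:R <= 2 * (max_coverage A k)%:R :> R.
  by rewrite -natrM ler_nat num_large_le_double_max_coverage.
apply: (le_trans large_le).
have -> : 2 * C1 * k%:R * ln d%:R / eps ^+ 2 = 2 * (C1 * k%:R * ln d%:R / eps ^+ 2).
  by rewrite !mulrA.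
by apply: ler_wpM2l.
Qed.
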